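(* Let $k\ge 0$. For every $k$-essential term $\alpha$ there exists a $k$-correct term $\alpha'$ equivalent to $\alpha$.
   Context: Let $\Sigma$ be a finite alphabet, $1\notin\Sigma$ a separator, $\Sigma_1=\Sigma\cup\{1\}$, $\mathrm{rk}(w)=|w|_1$ for $w\in\Sigma_1^*$; for $\mathrm{rk}(u)\ge j$, $u\odot_j v$ replaces the $j$-th occurrence of $1$ in $u$ by $v$; these operations extend elementwise to sets of words. Let $N$ be a set of nonterminals, each with a rank in $\mathbb{N}$. Terms (with ranks) are built from nonterminals (their rank), words of $\Sigma^*$ (rank $0$) and $1$ (rank $1$) by $(\alpha\cdot\beta)$ of rank $\mathrm{rk}\alpha+\mathrm{rk}\beta$ and $(\alpha\odot_j\beta)$, $j\ge1$, allowed when $\mathrm{rk}\alpha\ge j$, of rank $\mathrm{rk}\alpha+\mathrm{rk}\beta-1$. A term is $k$-correct if all its subterms have rank at most $k$; it is $k$-essential if its rank and the ranks of all nonterminals occurring in it are less than $k$. A ground multicontext is such an expression built additionally from ranked variables $x_1,\dots,x_t$ as leaves but without nonterminals; two ground multicontexts are equivalent if for every valuation $\mu$ assigning to each variable of rank $r$ a set of words of rank $r$, their values (with $\cdot$ as concatenation and $\odot_j$ as intercalation, elementwise) coincide. Two terms $\alpha_1,\alpha_2$ are equivalent if $\alpha_1=D_1[A_1,\dots,A_s]$ and $\alpha_2=D_2[A_1,\dots,A_s]$ for some nonterminals $A_1,\dots,A_s$ and equivalent ground multicontexts $D_1,D_2$ in variables $x_1,\dots,x_s$. *)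

From mathcomp Require Import all_boot.
Set Implicit Arguments. Unset Strict Implicit. Unset Printing Implicit Defensive.

Section Defs.
Variable Sigma : finType.

(* Words over Sigma_1 = Sigma + {1}; the separator 1 is encoded as None. *)
Definition word := seq (option Sigma).

Definition is_sep (x : option Sigma) : bool := if x is None then true else false.

Definition wrk (w : word) : nat := count is_sep w.

(* u (.)_j v : replace the j-th (1-based) occurrence of 1 in u by v. *)
Fixpoint ins (j : nat) (u v : word) : word :=
  match u with
  | [::] => [::]
  | None :: u' => if j == 1 then v ++ u' else None :: ins j.-1 u' v
  | Some a :: u' => Some a :: ins j u' v
  end.

(* Expressions with leaves in V: V = nonterminals gives terms,
   V = 'I_s (variables x_1..x_s) gives ground multicontexts. *)
Inductive expr (V : Type) : Type :=
| ELeaf of V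
| EWord of seq Sigma
| EOne
| ECat of expr V & expr V
| EIns of nat & expr V & expr V.

Section Generic.
Variables (V : Type) (rkV : V -> nat).

Fixpoint erk (e : expr V) : nat :=
  match e with
  | ELeaf A => rkV A
  | EWord _ => 0
  | EOne => 1
  | ECat a b => erk a + erk b
  | EIns _ a b => erk a + erk b - 1
  end.

Fixpoint ewf (e : expr V) : Prop :=
  match e with
  | ECat a b => ewf a /\ ewf b
  | EIns j a b => [/\ 1 <= j, j <= erk a, ewf a & ewf b]
  | _ => True
  end.

Fixpoint subranks_le (k : nat) (e : expr V) : Prop :=
  match e with
  | ECat a b => [/\ erk e <= k, subranks_le k a & subranks_le k b]
  | EIns _ a b => [/\ erk e <= k, subranks_le k a & subranks_le k b]
  | _ => erk e <= k
  end.

Fixpoint leaves_rank_lt (k : nat) (e : expr V) : Prop :=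
  match e with
  | ELeaf A => rkV A < k
  | ECat a b => leaves_rank_lt k a /\ leaves_rank_lt k b
  | EIns _ a b => leaves_rank_lt k a /\ leaves_rank_lt k b
  | _ => True
  end.

Fixpoint eval (mu : V -> word -> Prop) (e : expr V) : word -> Prop :=
  match e with
  | ELeaf x => mu x
  | EWord w => fun z => z = map Some w
  | EOne => fun z => z = [:: None]
  | ECat a b => fun z => exists u v, [/\ eval mu a u, eval mu b v & z = u ++ v]
  | EIns j a b => fun z => exists u v, [/\ eval mu a u, eval mu b v & z = ins j u v]
  end.
End Generic.

Fixpoint emap (V W : Type) (f : V -> W) (e : expr V) : expr W :=
  match e with
  | ELeaf x => ELeaf (f x)
  | EWord w => EWord _ w
  | EOne => EOne _
  | ECat a b => ECat (emap f a) (emap f b)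
  | EIns j a b => EIns j (emap f a) (emap f b)
  end.

Section Terms.
Variables (N : Type) (rkN : N -> nat).

Definition term := expr N.

Definition k_correct (k : nat) (t : term) : Prop :=
  ewf rkN t /\ subranks_le rkN k t.

Definition k_essential (k : nat) (t : term) : Prop :=
  [/\ ewf rkN t, erk rkN t < k & leaves_rank_lt rkN k t].

Definition gmc_equiv (s : nat) (rkx : 'I_s -> nat) (D1 D2 : expr 'I_s) : Prop :=
  ewf rkx D1 /\ ewf rkx D2 /\
  forall mu : 'I_s -> word -> Prop,
    (forall i w, mu i w -> wrk w = rkx i) ->
    forall z, eval mu D1 z <-> eval mu D2 z.

Definition term_equiv (a1 a2 : term) : Prop :=
  exists (s : nat) (A : 'I_s -> N) (D1 D2 : expr 'I_s),
    [/\ a1 = emap A D1, a2 = emap A D2 & gmc_equiv (fun i => rkN (A i)) D1 D2].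
End Terms.
End Defs.

From mathcomp Require Import all_boot zify.
Set Implicit Arguments. Unset Strict Implicit. Unset Printing Implicit Defensive.

(* A term is first brought to a normal form: a tree of concatenations and of
   nonterminals all of whose separators are filled by subtrees.  An insertion
   into such a tree can be pushed down to the subtree owning the targeted
   separator, so every term evaluates like its normal form under every
   rank-preserving valuation.  A normal form is then written back as a term,
   each nonterminal receiving its subtrees of rank 0 first and the others
   afterwards.  With this order every intermediate subterm has rank at most
   the rank of a nonterminal or of the whole normal form, both smaller than k.
   Finally a term D[A_1, ..., A_s] is handled through its ground multicontext D. *)

Lemma nseqS_cat (T : Type) (x : T) n s : nseq n.+1 x ++ s = nseq n x ++ x :: s.
Proof. by rewrite -addn1 nseqD -catA. Qed.

Section Words.
Variable Sigma : finType.
Notation word := (word Sigma).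
Implicit Types (u v w : word) (s : seq Sigma).

Lemma wrk_cat u v : wrk (u ++ v) = wrk u + wrk v.
Proof. by rewrite /wrk count_cat. Qed.

Lemma wrk_word s : wrk (map Some s) = 0.
Proof. by rewrite /wrk count_map; elim: s. Qed.

Lemma wrk_ins j u v : 1 <= j <= wrk u -> wrk (ins j u v) = wrk u + wrk v - 1.
Proof.
elim: u j => [|[a|] u IHu] j /=; first by rewrite /wrk /=; lia.
  exact: IHu.
case: eqP => [-> _|j_neq1 lt_j]; first by rewrite wrk_cat; lia.
rewrite -[wrk (None :: _)]/(wrk _).+1 IHu; lia.
Qed.

Lemma ex_pair_iff (P P' Q Q' : word -> Prop) (f : word -> word -> word) z :
  (forall u, P u <-> P' u) -> (forall v, Q v <-> Q' v) ->
  (exists u v, [/\ P u, Q v & z = f u v]) <-> (exists u v, [/\ P' u, Q' v & z = f u v]).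
Proof. by move=> PP QQ; split=> -[u [v [/PP Pu /QQ Qv ->]]]; exists u, v. Qed.

Lemma ins0 u v : ins 0 u v = u.
Proof. by elim: u => [|[a|] u /= ->]. Qed.

Lemma ins_catl j u u' v : j <= wrk u -> ins j (u ++ u') v = ins j u v ++ u'.
Proof.
elim: u j => [|[a|] u IHu] j /=; first by case: j => // _; rewrite ins0.
  by move=> ?; rewrite IHu.
by case: eqP => [_ _|_ ?]; rewrite ?catA // IHu //; lia.
Qed.

Lemma ins_catr j u u' v : wrk u < j -> ins j (u ++ u') v = u ++ ins (j - wrk u) u' v.
Proof.
elim: u j => [|[a|] u IHu] j /=; first by rewrite subn0.
  by move=> ?; rewrite IHu.
case: j => [|[|j]] //= lt_j; rewrite IHu //; lia.
Qed.

(* [fill u os] replaces the successive separators of [u] by the words of [os];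
   a [None] entry, or exhaustion of [os], leaves the separator in place. *)
Fixpoint fill u (os : seq (option word)) : word :=
  match u with
  | [::] => [::]
  | Some a :: u' => Some a :: fill u' os
  | None :: u' =>
    match os with
    | [::] => None :: fill u' [::]
    | o :: os' => (if o is Some v then v else [:: None]) ++ fill u' os'
    end
  end.

Lemma fill_nil u : fill u [::] = u.
Proof. by elim: u => [|[a|] u /= ->]. Qed.

Lemma fill_nseq_None n u : fill u (nseq n None) = u.
Proof.
elim: u n => [|[a|] u IHu] n //=; first by rewrite IHu.
by case: n => [|n] /=; rewrite ?fill_nil ?IHu.
Qed.

Lemma fill_sep_word n u : fill u (map Some (nseq n [:: None])) = u.
Proof.
elim: u n => [|[a|] u IHu] n //=; first by rewrite IHu.
by case: n => [|n] /=; rewrite ?fill_nil ?IHu.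
Qed.

Lemma ins_fill_nseq_None n u v os : n < wrk u ->
  ins n.+1 (fill u (nseq n.+1 None ++ os)) v = fill u (nseq n None ++ Some v :: os).
Proof.
elim: u n => [|[a|] u IHu] n //=; first by move=> ?; rewrite IHu.
case: n => [|n] //= lt_n; rewrite IHu /wrk //=; lia.
Qed.

Lemma fill_cat_wrk0 v u os : wrk v = 0 -> fill (v ++ u) os = v ++ fill u os.
Proof. by elim: v => [|[a|] v IHv] //= ?; rewrite IHv. Qed.

Definition sep_free (ovs : seq (option word)) := forall v, Some v \in ovs -> wrk v = 0.

Lemma sep_free_cons v ovs : wrk v = 0 -> sep_free ovs -> sep_free (Some v :: ovs).
Proof. by move=> v0 free w; rewrite inE => /orP [/eqP [->] | /free]. Qed.

(* The separators left in place by [o1] are the ones filled by [o2]. *)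
Fixpoint merge (o1 o2 : seq (option word)) : seq (option word) :=
  match o1, o2 with
  | [::], _ => o2
  | Some v :: o1', _ => Some v :: merge o1' o2
  | None :: o1', [::] => None :: merge o1' [::]
  | None :: o1', o :: o2' => o :: merge o1' o2'
  end.

Lemma fill_fill u o1 o2 : sep_free o1 -> fill (fill u o1) o2 = fill u (merge o1 o2).
Proof.
elim: u o1 o2 => [|[a|] u IHu] o1 o2 o1_0 //=; first by rewrite IHu.
case: o1 o1_0 => [|o o1] o1_0 /=; first by rewrite !fill_nil.
have {}IHu o2' : fill (fill u o1) o2' = fill u (merge o1 o2').
  by apply: IHu => v o1v; apply: o1_0; rewrite inE o1v orbT.
case: o o1_0 => [v|] o1_0; last by case: o2 => [|o o2] /=; rewrite IHu.
by rewrite fill_cat_wrk0 ?IHu //; apply/o1_0/mem_head.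
Qed.

Fixpoint ins_seq j (vs : seq word) w : seq word :=
  match vs with
  | [::] => [::]
  | v :: vs' => if j <= wrk v then ins j v w :: vs' else v :: ins_seq (j - wrk v) vs' w
  end.

Lemma ins_fill j u w vs : wrk u = size vs ->
  ins j (fill u (map Some vs)) w = fill u (map Some (ins_seq j vs w)).
Proof.
elim: u j vs => [|[a|] u IHu] j vs //=; first by move=> ?; rewrite IHu.
case: vs => [|v vs] //= [size_vs].
case: ifP => le_j /=; first by rewrite ins_catl.
by rewrite ins_catr ?IHu //; lia.
Qed.

Lemma wrk_fill u vs : wrk u = size vs -> wrk (fill u (map Some vs)) = sumn (map (@wrk _) vs).
Proof.
elim: u vs => [|[a|] u IHu] [|v vs] // size_vs; try exact: IHu.
by rewrite /= wrk_cat IHu //; case: size_vs.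
Qed.

End Words.

Section InsertMany.
Variables (Sigma : finType) (V : Type) (rkV : V -> nat).
Notation word := (word Sigma).
Notation expr := (expr Sigma V).
Implicit Types (c e : expr) (os : seq (option expr)).

Definition rank_preserving (mu : V -> word -> Prop) := forall x w, mu x w -> wrk w = rkV x.

Lemma eval_wrk mu e z : rank_preserving mu -> ewf rkV e -> eval mu e z -> wrk z = erk rkV e.
Proof.
move=> mu_rk; elim: e z => [x|s||a IHa b IHb|j a IHa b IHb] z /=.
- by move=> _ /mu_rk.
- by move=> _ ->; rewrite wrk_word.
- by move=> _ ->.
- by move=> [wf_a wf_b] [u [v [ua vb ->]]]; rewrite wrk_cat (IHa u) // (IHb v).
- move=> [j_gt0 j_le wf_a wf_b] [u [v [ua vb ->]]].
  by rewrite wrk_ins (IHa u) ?(IHb v) // j_gt0.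
Qed.

(* [ins_many c j os] inserts the [Some] entries of [os] into [c], the i-th entry (from 0)
   going to the (j + i)-th separator of [c]; insertions are performed from the
   right, so that the positions to the left are not shifted. *)
Fixpoint ins_many c j os : expr :=
  match os with
  | [::] => c
  | Some e :: os' => EIns j (ins_many c j.+1 os') e
  | None :: os' => ins_many c j.+1 os'
  end.

Definition orank (o : option expr) : nat := if o is Some e then erk rkV e else 1.

Lemma sumn_orank_Some (l : seq expr) : sumn (map orank (map Some l)) = sumn (map (erk rkV) l).
Proof. by elim: l => //= e l ->. Qed.

Lemma erk_ins_many c n os : n + size os <= erk rkV c ->
  erk rkV (ins_many c n.+1 os) = erk rkV c - size os + sumn (map orank os).
Proof. by elim: os n => [|[e|] os IHos] n /= le_os; rewrite ?IHos /=; lia. Qed.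

Fixpoint all_some (P : expr -> Prop) os : Prop :=
  match os with
  | [::] => True
  | Some e :: os' => P e /\ all_some P os'
  | None :: os' => all_some P os'
  end.

Lemma ewf_ins_many c n os : ewf rkV c -> all_some (ewf rkV) os ->
  n + size os <= erk rkV c -> ewf rkV (ins_many c n.+1 os).
Proof.
elim: os n => [|[e|] os IHos] n //= wf_c; last by move=> ? ?; apply: IHos => //; lia.
move=> [wf_e wf_os] le_os; split=> //; last by apply: IHos => //; lia.
rewrite erk_ins_many; lia.
Qed.

Lemma subranks_ins_many K c n os : subranks_le rkV K c -> all_some (subranks_le rkV K) os ->
  n + size os <= erk rkV c ->
  (forall i, i < size os -> erk rkV c - size (drop i os) + sumn (map orank (drop i os)) <= K) ->
  subranks_le rkV K (ins_many c n.+1 os).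
Proof.
elim: os n => [|[e|] os IHos] n //= sub_c.
- move=> [sub_e sub_os] le_os le_K; split=> //.
    by rewrite erk_ins_many; [have := le_K 0 isT; rewrite drop0 /=|]; lia.
  by apply: IHos => //; [lia | move=> i /(le_K i.+1)].
- by move=> sub_os le_os le_K; apply: IHos => //; [lia | move=> i /(le_K i.+1)].
Qed.

Fixpoint opt_rel (R : expr -> word -> Prop) os (ovs : seq (option word)) : Prop :=
  match os, ovs with
  | [::], [::] => True
  | None :: os', None :: ovs' => opt_rel R os' ovs'
  | Some e :: os', Some v :: ovs' => R e v /\ opt_rel R os' ovs'
  | _, _ => False
  end.

Lemma eval_ins_many mu c n os z : (forall u, eval mu c u -> n + size os <= wrk u) ->
  eval mu (ins_many c n.+1 os) z <->
  exists u ovs, [/\ eval mu c u, opt_rel (eval mu) os ovs & z = fill u (nseq n None ++ ovs)].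
Proof.
elim: os n z => [|o os IHos] n z /= c_rk.
  split=> [cz | [u [ovs [cu rel ->]]]]; first by exists z, [::]; rewrite cats0 fill_nseq_None.
  by case: ovs rel => // _; rewrite cats0 fill_nseq_None.
have c_rk' u : eval mu c u -> n.+1 + size os <= wrk u by move/c_rk; lia.
have ins_next u ovs v : eval mu c u ->
    ins n.+1 (fill u (nseq n.+1 None ++ ovs)) v = fill u (nseq n None ++ Some v :: ovs).
  by move=> /c_rk cu; rewrite ins_fill_nseq_None //; lia.
case: o => [e|] /=; last first.
  rewrite (IHos _ _ c_rk'); split=> [[u [ovs [cu rel ->]]] | [u [ovs [cu rel ->]]]].
    by exists u, (None :: ovs); rewrite -nseqS_cat.
  by case: ovs rel => [|[v|] ovs] //= rel; exists u, ovs; rewrite -nseqS_cat.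
split=> [[w [v [/(IHos _ _ c_rk') [u [ovs [cu rel ->]]] ev ->]]] |].
  by exists u, (Some v :: ovs); rewrite ins_next.
move=> [u [ovs [cu + ->]]]; case: ovs => [|[v|] ovs] //= [ev rel].
exists (fill u (nseq n.+1 None ++ ovs)), v; rewrite ins_next //; split=> //.
by apply/(IHos _ _ c_rk'); exists u, ovs.
Qed.

End InsertMany.

Section NormalForm.
Variables (Sigma : finType) (V : Type) (rkV : V -> nat).
Notation word := (word Sigma).
Notation expr := (expr Sigma V).

(* [NApp x args] is the nonterminal [x] with its separators filled by [args]. *)
Inductive nf := NWord of seq Sigma | NOne | NCat of nf & nf | NApp of V & seq nf.

Fixpoint nf_all (P : nf -> Prop) (l : seq nf) : Prop :=
  if l is a :: l' then P a /\ nf_all P l' else True.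

Lemma nf_all_impl (P Q : nf -> Prop) l : nf_all (fun a => P a -> Q a) l -> nf_all P l -> nf_all Q l.
Proof. by elim: l => //= a l IHl [PQa PQl] [Pa Pl]; split; auto. Qed.

Lemma nf_all_mono (P Q : nf -> Prop) l : (forall a, P a -> Q a) -> nf_all P l -> nf_all Q l.
Proof. by move=> PQ; elim: l => //= a l IHl [Pa Pl]; split; auto. Qed.

Lemma nf_all_drop (P : nf -> Prop) l i : nf_all P l -> nf_all P (drop i l).
Proof. by elim: l i => [|a l IHl] [|i] //= [_ Pl]; apply: IHl. Qed.

Definition nf_ind_all (P : nf -> Prop)
  (HW : forall s, P (NWord s)) (H1 : P NOne) (HC : forall a b, P a -> P b -> P (NCat a b))
  (HA : forall x args, nf_all P args -> P (NApp x args)) : forall n, P n :=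
  fix F n := match n return P n with
  | NWord s => HW s | NOne => H1 | NCat a b => HC a b (F a) (F b)
  | NApp x args => HA x args ((fix G l := match l return nf_all P l with
                   [::] => I | a :: l' => conj (F a) (G l') end) args)
  end.

Fixpoint nrk (n : nf) : nat :=
  match n with
  | NWord _ => 0 | NOne => 1 | NCat a b => nrk a + nrk b
  | NApp x args => sumn (map nrk args)
  end.

Fixpoint nwf (n : nf) : Prop :=
  match n with
  | NCat a b => nwf a /\ nwf b
  | NApp x args => size args = rkV x /\ nf_all nwf args
  | _ => True
  end.

Fixpoint nleaves_le (K : nat) (n : nf) : Prop :=
  match n with
  | NCat a b => nleaves_le K a /\ nleaves_le K b
  | NApp x args => rkV x <= K /\ nf_all (nleaves_le K) args
  | _ => True
  end.

Fixpoint rel_seq (R : nf -> word -> Prop) (args : seq nf) (vs : seq word) : Prop :=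
  match args, vs with
  | [::], [::] => True
  | a :: args', v :: vs' => R a v /\ rel_seq R args' vs'
  | _, _ => False
  end.

Lemma rel_seq_size R args vs : rel_seq R args vs -> size vs = size args.
Proof. by elim: args vs => [|a l IHl] [|v vs] //= [_ /IHl ->]. Qed.

Fixpoint neval (mu : V -> word -> Prop) (n : nf) : word -> Prop :=
  match n with
  | NWord s => fun z => z = map Some s
  | NOne => fun z => z = [:: None]
  | NCat a b => fun z => exists u v, [/\ neval mu a u, neval mu b v & z = u ++ v]
  | NApp x args => fun z =>
      exists u vs, [/\ mu x u, rel_seq (neval mu) args vs & z = fill u (map Some vs)]
  end.

Lemma neval_wrk mu : rank_preserving rkV mu -> forall n z, nwf n -> neval mu n z -> wrk z = nrk n.
Proof.
move=> mu_rk; elim/nf_ind_all => [s||a b IHa IHb|x args IH] z /=.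
- by move=> _ ->; rewrite wrk_word.
- by move=> _ ->.
- by move=> [wf_a wf_b] [u [v [ua vb ->]]]; rewrite wrk_cat (IHa u) // (IHb v).
- move=> [size_args wf_args] [u [vs [/mu_rk xu rel ->]]].
  rewrite wrk_fill ?xu ?(rel_seq_size rel) //.
  elim: args vs IH wf_args rel {xu size_args} => [|a l IHl] [|v vs] //=.
  move=> [IHa IHl'] [wf_a wf_l] [av rel].
  by rewrite (IHa v) // IHl.
Qed.

Fixpoint ins_args (f : nat -> nf -> nf -> nf) (j : nat) (args : seq nf) (w : nf) : seq nf :=
  match args with
  | [::] => [::]
  | a :: l => if j <= nrk a then f j a w :: l else a :: ins_args f (j - nrk a) l w
  end.

(* [ninsert j n w] is the normal form of [a (.)_j b] when [n] and [w] are those of [a] and [b]. *)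
Fixpoint ninsert (j : nat) (n w : nf) : nf :=
  match n with
  | NWord _ => n
  | NOne => w
  | NCat a b => if j <= nrk a then NCat (ninsert j a w) b else NCat a (ninsert (j - nrk a) b w)
  | NApp x args => NApp x (ins_args ninsert j args w)
  end.

Fixpoint normalize (e : expr) : nf :=
  match e with
  | ELeaf x => NApp x (nseq (rkV x) NOne)
  | EWord s => NWord s
  | EOne => NOne
  | ECat a b => NCat (normalize a) (normalize b)
  | EIns j a b => ninsert j (normalize a) (normalize b)
  end.

Lemma size_ins_args f j args w : size (ins_args f j args w) = size args.
Proof. by elim: args j => [|a l IHl] j //=; case: ifP => _ /=; rewrite ?IHl. Qed.

Lemma nrk_ninsert w n j : 1 <= j <= nrk n -> nrk (ninsert j n w) = nrk n + nrk w - 1.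
Proof.
elim/nf_ind_all: n j => [s||a b IHa IHb|x args IH] j //=; try lia.
  by case: ifP => le_j lt_j /=; [rewrite IHa | rewrite IHb]; lia.
elim: args j IH => [|a l IHl] j /=; first lia.
by move=> [IHa IHl']; case: ifP => le_j lt_j /=; [rewrite IHa | rewrite IHl //]; lia.
Qed.

Lemma nwf_ninsert w n j : nwf w -> nwf n -> nwf (ninsert j n w).
Proof.
move=> wf_w; elim/nf_ind_all: n j => [s||a b IHa IHb|x args IH] j //=.
  by move=> [wf_a wf_b]; case: ifP => _ /=; split; auto.
move=> [size_args wf_args]; split; first by rewrite size_ins_args.
elim: args j {size_args} IH wf_args => [|a l IHl] j //= [IHa IHl'] [wf_a wf_l].
by case: ifP => _ /=; split; auto.
Qed.

Lemma nleaves_le_ninsert K w n j : nleaves_le K w -> nleaves_le K n -> nleaves_le K (ninsert j n w).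
Proof.
move=> le_w; elim/nf_ind_all: n j => [s||a b IHa IHb|x args IH] j //=.
  by move=> [le_a le_b]; case: ifP => _ /=; split; auto.
move=> [le_x le_args]; split=> //.
elim: args j IH le_args => [|a l IHl] j //= [IHa IHl'] [le_a le_l].
by case: ifP => _ /=; split; auto.
Qed.

Lemma sumn_nrk_nseq_NOne r : sumn (map nrk (nseq r NOne)) = r.
Proof. by elim: r => //= r ->. Qed.

Lemma nrk_normalize e : ewf rkV e -> nrk (normalize e) = erk rkV e.
Proof.
elim: e => [x|s||a IHa b IHb|j a IHa b IHb] //=.
- by rewrite sumn_nrk_nseq_NOne.
- by move=> [wf_a wf_b]; rewrite IHa ?IHb.
- by move=> [j_gt0 j_le wf_a wf_b]; rewrite nrk_ninsert IHa ?IHb // j_gt0.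
Qed.

Lemma nwf_normalize e : nwf (normalize e).
Proof.
elim: e => [x|s||a IHa b IHb|j a IHa b IHb] //=; last exact: nwf_ninsert.
by split; [rewrite size_nseq | elim: (rkV x)].
Qed.

Lemma nleaves_le_normalize k e : leaves_rank_lt rkV k e -> nleaves_le k (normalize e).
Proof.
elim: e => [x|s||a IHa b IHb|j a IHa b IHb] //=.
- by move=> lt_x; split; [exact: ltnW | elim: (rkV x)].
- by move=> [lt_a lt_b]; split; auto.
- by move=> [lt_a lt_b]; apply: nleaves_le_ninsert; auto.
Qed.

Section Insertion.
Variables (mu : V -> word -> Prop) (w : nf).
Hypotheses (mu_rk : rank_preserving rkV mu) (wf_w : nwf w).

Definition neval_ninsert_spec (n : nf) := forall j z, nwf n -> 1 <= j <= nrk n ->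
  neval mu (ninsert j n w) z <-> exists u v, [/\ neval mu n u, neval mu w v & z = ins j u v].

Lemma rel_seq_ins_args args j vs' : nf_all neval_ninsert_spec args -> nf_all nwf args ->
  1 <= j <= sumn (map nrk args) ->
  rel_seq (neval mu) (ins_args ninsert j args w) vs' <->
  exists vs v, [/\ rel_seq (neval mu) args vs, neval mu w v & vs' = ins_seq j vs v].
Proof.
elim: args j vs' => [|a l IHl] j vs' /=; first lia.
move=> [IHa IHl'] [wf_a wf_l] lt_j.
have a_rk u : neval mu a u -> wrk u = nrk a by apply: neval_wrk.
case: ifP => le_j; split.
- case: vs' => [|v1 vs1] //= [/IHa av1 rel].
  have [|ua [v [au wv ->]]] := av1 wf_a; first lia.
  by exists (ua :: vs1), v; rewrite /= a_rk // le_j.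
- move=> [[|ua vs1] [v [//= [au rel] wv ->]]] /=.
  rewrite a_rk // le_j /=; split=> //.
  by apply/IHa => //; [lia | exists ua, v].
- case: vs' => [|v1 vs1] //= [av1 /IHl rel].
  have [|vs [v [rel' wv ->]]] := rel IHl' wf_l; first lia.
  by exists (v1 :: vs), v; rewrite /= a_rk // le_j.
- move=> [[|ua vs1] [v [//= [au rel] wv ->]]] /=.
  rewrite a_rk // le_j /=; split=> //.
  by apply/IHl => //; [lia | exists vs1, v].
Qed.

Lemma neval_ninsert n : neval_ninsert_spec n.
Proof.
elim/nf_ind_all: n => [s||a b IHa IHb|x args IH] j z /=; try lia.
- move=> _ lt_j; have -> : j = 1 by lia.
  split=> [zw | [u [v [-> wv ->]]]]; last by rewrite /= cats0.
  by exists [:: None], z; rewrite /= cats0.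
- move=> [wf_a wf_b] lt_j.
  have a_rk u : neval mu a u -> wrk u = nrk a by apply: neval_wrk.
  case: ifP => le_j /=.
    have {}IHa := IHa j _ wf_a; have lt_ja : 1 <= j <= nrk a by lia.
    split=> [[u1 [u2 [/(IHa _ lt_ja) [ua [v [au wv ->]]] b2 ->]]] |].
      by exists (ua ++ u2), v; rewrite ins_catl ?a_rk //; split=> //; exists ua, u2.
    move=> [u [v [[ua [ub [au bu ->]]] wv ->]]].
    exists (ins j ua v), ub; rewrite ins_catl ?a_rk //; split=> //.
    by apply/IHa => //; exists ua, v.
  have {}IHb := IHb (j - nrk a) _ wf_b; have lt_jb : 1 <= j - nrk a <= nrk b by lia.
  split=> [[u1 [u2 [a1 /(IHb _ lt_jb) [ub [v [bu wv ->]]] ->]]] |].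
    by exists (u1 ++ ub), v; rewrite ins_catr a_rk //; [split=> //; exists u1, ub | lia].
  move=> [u [v [[ua [ub [au bu ->]]] wv ->]]].
  exists ua, (ins (j - nrk a) ub v); rewrite ins_catr a_rk //; last lia; split=> //.
  by apply/IHb => //; exists ub, v.
- move=> [size_args wf_args] lt_j.
  have x_rk u vs : mu x u -> rel_seq (neval mu) args vs -> wrk u = size vs.
    by move=> /mu_rk -> /rel_seq_size ->.
  split.
  + move=> [u [vs' [xu /rel_seq_ins_args [//|//|//|vs [v [rel wv ->]]] ->]]].
    exists (fill u (map Some vs)), v; rewrite ins_fill ?(x_rk _ _ xu rel) //.
    by split=> //; exists u, vs.
  + move=> [u' [v [[u [vs [xu rel ->]]] wv ->]]].
    exists u, (ins_seq j vs v); rewrite ins_fill ?(x_rk _ _ xu rel) //; split=> //.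
    by apply/rel_seq_ins_args => //; exists vs, v.
Qed.

End Insertion.

Lemma rel_seq_NOne mu r vs : rel_seq (neval mu) (nseq r NOne) vs <-> vs = nseq r [:: None].
Proof.
elim: r vs => [|r IHr] [|v vs] //=.
by rewrite IHr; split=> [[-> ->] | [-> ->]].
Qed.

Lemma eval_normalize mu e z : rank_preserving rkV mu -> ewf rkV e ->
  eval mu e z <-> neval mu (normalize e) z.
Proof.
move=> mu_rk; elim: e z => [x|s||a IHa b IHb|j a IHa b IHb] z //=.
- move=> _; split=> [xz | [u [vs [xu /rel_seq_NOne -> ->]]]]; last by rewrite fill_sep_word.
  by exists z, (nseq (rkV x) [:: None]); rewrite fill_sep_word; split=> //; apply/rel_seq_NOne.
- by move=> [wf_a wf_b]; apply: ex_pair_iff => u; [exact: IHa | exact: IHb].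
- move=> [j_gt0 j_le wf_a wf_b].
  have [wf_na wf_nb] := (nwf_normalize a, nwf_normalize b).
  rewrite neval_ninsert ?nrk_normalize ?j_gt0 //.
  by apply: ex_pair_iff => u; [exact: IHa | exact: IHb].
Qed.

End NormalForm.

Section Realization.
Variables (Sigma : finType) (V : Type) (rkV : V -> nat).
Notation word := (word Sigma).
Notation expr := (expr Sigma V).
Notation nf := (nf Sigma V).
Notation nrk := (@nrk Sigma V).
Notation erk := (erk rkV).

Definition zero_part (f : nf -> expr) (args : seq nf) : seq (option expr) :=
  map (fun a => if nrk a == 0 then Some (f a) else None) args.

Definition pos_part (f : nf -> expr) (args : seq nf) : seq expr :=
  pmap (fun a => if nrk a == 0 then None else Some (f a)) args.

(* The arguments of rank 0 are inserted first, so that afterwards every pending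
   separator is later replaced by a term of positive rank: this keeps all
   intermediate ranks at most [maxn (rkV x) (nrk n)]. *)
Fixpoint realize (n : nf) : expr :=
  match n with
  | NWord s => EWord V s
  | NOne => EOne Sigma V
  | NCat a b => ECat (realize a) (realize b)
  | NApp x args =>
      ins_many (ins_many (ELeaf Sigma x) 1 (zero_part realize args)) 1
               (map Some (pos_part realize args))
  end.

Lemma size_pos_part f args : size (pos_part f args) = count (fun a => nrk a != 0) args.
Proof. by rewrite /pos_part; elim: args => //= a l IHl; case: ifP => _ /=; rewrite IHl. Qed.

Section Parts.
Variables (f : nf -> expr) (args : seq nf).
Hypothesis erk_f : nf_all (fun a => erk (f a) = nrk a) args.

Lemma sumn_orank_zero_part :
  sumn (map (orank rkV) (zero_part f args)) = count (fun a => nrk a != 0) args.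
Proof.
elim: args erk_f => //= a l IHl [erk_a erk_l].
by case: eqP => [a0|_] /=; rewrite IHl // ?erk_a ?a0.
Qed.

Lemma sumn_erk_pos_part : sumn (map erk (pos_part f args)) = sumn (map nrk args).
Proof.
rewrite /pos_part; elim: args erk_f => //= a l IHl [erk_a erk_l].
by case: eqP => [->|_] /=; rewrite IHl // erk_a.
Qed.

Lemma erk_pos_part_gt0 : all (fun e => 0 < erk e) (pos_part f args).
Proof.
rewrite /pos_part; elim: args erk_f => //= a l IHl [erk_a erk_l].
by case: eqP => [_|/eqP a_neq0] /=; rewrite IHl // erk_a lt0n a_neq0.
Qed.

End Parts.

Lemma all_some_zero_part (P : expr -> Prop) f args :
  nf_all (fun a => P (f a)) args -> all_some P (zero_part f args).
Proof. by elim: args => //= a l IHl [Pa Pl]; case: ifP => _ /=; auto. Qed.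

Lemma all_some_pos_part (P : expr -> Prop) f args :
  nf_all (fun a => P (f a)) args -> all_some P (map Some (pos_part f args)).
Proof. by rewrite /pos_part; elim: args => //= a l IHl [Pa Pl]; case: ifP => _ /=; auto. Qed.

Lemma erk_zero_part_inserted x f args : size args = rkV x ->
  nf_all (fun a => erk (f a) = nrk a) args ->
  erk (ins_many (ELeaf Sigma x) 1 (zero_part f args)) = size (pos_part f args).
Proof.
move=> size_args erk_f; rewrite erk_ins_many /zero_part size_map /= size_args //.
by rewrite subnn -/(zero_part f args) sumn_orank_zero_part // size_pos_part.
Qed.

Lemma erk_realize n : nwf rkV n -> erk (realize n) = nrk n.
Proof.
elim/nf_ind_all: n => [s||a b IHa IHb|x args IH] //=.
  by move=> [wf_a wf_b]; rewrite IHa ?IHb.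
move=> [size_args /(nf_all_impl IH) erk_args].
rewrite erk_ins_many ?erk_zero_part_inserted ?size_map //.
by rewrite subnn sumn_orank_Some sumn_erk_pos_part.
Qed.

Lemma ewf_realize n : nwf rkV n -> ewf rkV (realize n).
Proof.
elim/nf_ind_all: n => [s||a b IHa IHb|x args IH] //=.
  by move=> [wf_a wf_b]; split; auto.
move=> [size_args wf_args]; have erk_args := nf_all_mono (@erk_realize) wf_args.
have {}IH := nf_all_impl IH wf_args.
apply: ewf_ins_many; last by rewrite erk_zero_part_inserted // size_map.
  apply: ewf_ins_many => //; first exact: all_some_zero_part.
  by rewrite /zero_part size_map size_args.
exact: all_some_pos_part.
Qed.

Lemma sumn_drop_gt0 (l : seq expr) i : all (fun e => 0 < erk e) l -> i <= size l ->
  i + sumn (map erk (drop i l)) <= sumn (map erk l).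
Proof.
elim: l i => [|a l IHl] [|i] //= /andP [a_gt0 l_gt0] le_i.
by have := IHl i l_gt0 le_i; lia.
Qed.

Lemma sumn_orank_zero_part_le f args :
  nf_all (fun a => erk (f a) = nrk a) args ->
  sumn (map (orank rkV) (zero_part f args)) <= size args.
Proof. by move=> erk_f; rewrite sumn_orank_zero_part // count_size. Qed.

Lemma subranks_realize K n : nwf rkV n -> nrk n <= K -> nleaves_le rkV K n ->
  subranks_le rkV K (realize n).
Proof.
elim/nf_ind_all: n => [s||a b IHa IHb|x args IH] //=.
  move=> [wf_a wf_b] le_K [le_a le_b].
  by rewrite !erk_realize //; split=> //; [apply: IHa | apply: IHb] => //; lia.
move=> [size_args wf_args] le_K [le_x le_args]; have erk_args := nf_all_mono (@erk_realize) wf_args.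
have sub_args : nf_all (fun a => subranks_le rkV K (realize a)) args.
  elim: args {size_args erk_args} IH wf_args le_K le_args => //= a l IHl.
  move=> [IHa IHl'] [wf_a wf_l] le_K [le_a le_l].
  by split; [apply: IHa | apply: IHl] => //; lia.
apply: subranks_ins_many.
- apply: subranks_ins_many => //; first exact: all_some_zero_part.
    by rewrite /zero_part size_map /= size_args.
  move=> i _; rewrite -map_drop /= size_map size_drop -size_args.
  have := sumn_orank_zero_part_le (nf_all_drop i erk_args); rewrite /zero_part size_drop; lia.
- exact: all_some_pos_part.
- by rewrite erk_zero_part_inserted // size_map.
move=> i; rewrite erk_zero_part_inserted // -map_drop !size_map size_drop sumn_orank_Some => lt_i.
have := sumn_drop_gt0 (erk_pos_part_gt0 erk_args) (ltnW lt_i).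
rewrite sumn_erk_pos_part //; lia.
Qed.

Section Evaluation.
Variables (mu : V -> word -> Prop) (args : seq nf).
Hypotheses (mu_rk : rank_preserving rkV mu) (wf_args : nf_all (nwf rkV) args).
Hypothesis eval_args : nf_all (fun a => forall z, eval mu (realize a) z <-> neval mu a z) args.

Lemma merge_parts ovs1 ovs2 :
  opt_rel (eval mu) (zero_part realize args) ovs1 ->
  opt_rel (eval mu) (map Some (pos_part realize args)) ovs2 ->
  exists2 vs, rel_seq (neval mu) args vs & merge ovs1 ovs2 = map Some vs /\ sep_free ovs1.
Proof.
elim: args wf_args eval_args ovs1 ovs2 => [|a l IHl] /=.
  by move=> _ _ [|//] [|//] _ _; exists [::].
move=> [wf_a wf_l] [eval_a eval_l].
rewrite /pos_part /=; case: eqP => [a0|_] [|[v|] ovs1] //=.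
- move=> ovs2 [av rel1] rel2; have [vs rel [-> free]] := IHl wf_l eval_l _ _ rel1 rel2.
  exists (v :: vs); first by split=> //; apply/eval_a.
  by split=> //; apply: sep_free_cons; rewrite // (neval_wrk mu_rk wf_a (iffLR (eval_a v) av)) a0.
- case=> [|[v|] ovs2] //= rel1 [av rel2].
  have [vs rel [-> free]] := IHl wf_l eval_l _ _ rel1 rel2.
  by exists (v :: vs); [split=> //; apply/eval_a | split].
Qed.

Lemma split_parts vs : rel_seq (neval mu) args vs ->
  exists ovs1 ovs2, [/\ opt_rel (eval mu) (zero_part realize args) ovs1,
    opt_rel (eval mu) (map Some (pos_part realize args)) ovs2,
    merge ovs1 ovs2 = map Some vs & sep_free ovs1].
Proof.
elim: args wf_args eval_args vs => [|a l IHl] /=.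
  by move=> _ _ [|//] _; exists [::], [::].
move=> [wf_a wf_l] [eval_a eval_l] [|v vs] //= [av rel].
have [ovs1 [ovs2 [rel1 rel2 merged free]]] := IHl wf_l eval_l _ rel.
rewrite /pos_part /=; case: eqP => [a0|_].
  exists (Some v :: ovs1), ovs2; rewrite /= merged; split=> //; first by split=> //; apply/eval_a.
  by apply: sep_free_cons; rewrite // (neval_wrk mu_rk wf_a av) a0.
by exists (None :: ovs1), (Some v :: ovs2); rewrite /= merged; split=> //; split=> //; apply/eval_a.
Qed.

Lemma eval_realize_app x : size args = rkV x -> forall z,
  eval mu (realize (NApp x args)) z <-> neval mu (NApp x args) z.
Proof.
move=> size_args z; have erk_args := nf_all_mono (@erk_realize) wf_args.
set inner := ins_many (ELeaf Sigma x) 1 (zero_part realize args).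
have wf_inner : ewf rkV inner.
  apply: ewf_ins_many => //; last by rewrite /zero_part size_map size_args.
  exact/all_some_zero_part/(nf_all_mono ewf_realize wf_args).
have x_rk u : eval mu (ELeaf Sigma x) u -> 0 + size (zero_part realize args) <= wrk u.
  by move=> /mu_rk ->; rewrite /zero_part size_map size_args.
have inner_rk w : eval mu inner w -> 0 + size (map Some (pos_part realize args)) <= wrk w.
  by move=> /(eval_wrk mu_rk wf_inner) ->; rewrite erk_zero_part_inserted // size_map.
rewrite /= (eval_ins_many _ inner_rk); split.
  move=> [w [ovs2 [/(eval_ins_many _ x_rk) [u [ovs1 [xu rel1 ->]]] rel2 ->]]].
  have [vs rel [merged free]] := merge_parts rel1 rel2.
  by exists u, vs; rewrite /= fill_fill // merged.
move=> [u [vs [xu rel ->]]].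
have [ovs1 [ovs2 [rel1 rel2 merged free]]] := split_parts rel.
exists (fill u ovs1), ovs2; rewrite /= fill_fill // merged; split=> //.
by apply/(eval_ins_many _ x_rk); exists u, ovs1.
Qed.

End Evaluation.

Lemma eval_realize mu n : rank_preserving rkV mu -> nwf rkV n ->
  forall z, eval mu (realize n) z <-> neval mu n z.
Proof.
move=> mu_rk; elim/nf_ind_all: n => [s||a b IHa IHb|x args IH] //=.
  by move=> [wf_a wf_b] z; apply: ex_pair_iff => u; [exact: IHa | exact: IHb].
move=> [size_args wf_args].
exact: (eval_realize_app mu_rk wf_args (nf_all_impl IH wf_args) size_args).
Qed.

End Realization.

Section Normalization.
Variables (Sigma : finType) (V : Type) (rkV : V -> nat).

Lemma exists_subranks_le_equiv k (e : expr Sigma V) :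
  ewf rkV e -> erk rkV e < k -> leaves_rank_lt rkV k e ->
  exists2 e', ewf rkV e' /\ subranks_le rkV k e' &
    forall mu, rank_preserving rkV mu -> forall z, eval mu e z <-> eval mu e' z.
Proof.
move=> wf_e lt_e leaves_e; have wf_n := nwf_normalize rkV e.
exists (realize (normalize rkV e)).
  split; first exact: ewf_realize.
  by apply: subranks_realize => //; [rewrite nrk_normalize // ltnW | apply: nleaves_le_normalize].
by move=> mu mu_rk z; rewrite (eval_normalize _ mu_rk wf_e) (eval_realize mu_rk wf_n).
Qed.

End Normalization.

Section Renaming.
Variable Sigma : finType.

Lemma emap_comp (U V W : Type) (f : V -> W) (g : U -> V) (D : expr Sigma U) :
  emap f (emap g D) = emap (f \o g) D.
Proof. by elim: D => //= [a -> b ->|j a -> b ->]. Qed.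

Lemma eq_emap (V W : Type) (f g : V -> W) (D : expr Sigma V) : f =1 g -> emap f D = emap g D.
Proof. by move=> fg; elim: D => //= [x|a -> b ->|j a -> b ->]; rewrite ?fg. Qed.

Section Ranks.
Variables (V W : Type) (rkW : W -> nat) (f : V -> W).
Notation rkV := (fun x => rkW (f x)).

Lemma erk_emap (D : expr Sigma V) : erk rkW (emap f D) = erk rkV D.
Proof. by elim: D => //= [a -> b ->|j a -> b ->]. Qed.

Lemma ewf_emap (D : expr Sigma V) : ewf rkW (emap f D) <-> ewf rkV D.
Proof.
elim: D => //= [a IHa b IHb|j a IHa b IHb]; first by rewrite IHa IHb.
by rewrite erk_emap; split=> -[j_gt0 j_le wf_a wf_b]; split=> //; by [apply/IHa | apply/IHb].
Qed.

Lemma subranks_le_emap k (D : expr Sigma V) : subranks_le rkW k (emap f D) <-> subranks_le rkV k D.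
Proof.
elim: D => //= [a IHa b IHb|j a IHa b IHb]; rewrite !erk_emap;
  by split=> -[le_k sub_a sub_b]; split=> //; by [apply/IHa | apply/IHb].
Qed.

Lemma leaves_rank_lt_emap k (D : expr Sigma V) :
  leaves_rank_lt rkW k (emap f D) <-> leaves_rank_lt rkV k D.
Proof. by elim: D => //= [a IHa b IHb|j a IHa b IHb]; rewrite IHa IHb. Qed.

End Ranks.

Definition join_ord (N : Type) s1 s2 (A1 : 'I_s1 -> N) (A2 : 'I_s2 -> N) (i : 'I_(s1 + s2)) : N :=
  match split i with inl i1 => A1 i1 | inr i2 => A2 i2 end.

Lemma join_ord_lshift (N : Type) s1 s2 (A1 : 'I_s1 -> N) (A2 : 'I_s2 -> N) (D : expr Sigma 'I_s1) :
  emap (join_ord A1 A2) (emap (lshift s2) D) = emap A1 D.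
Proof. by rewrite emap_comp; apply: eq_emap => i; rewrite /= /join_ord (unsplitK (inl i)). Qed.

Lemma join_ord_rshift (N : Type) s1 s2 (A1 : 'I_s1 -> N) (A2 : 'I_s2 -> N) (D : expr Sigma 'I_s2) :
  emap (join_ord A1 A2) (emap (@rshift s1 s2) D) = emap A2 D.
Proof. by rewrite emap_comp; apply: eq_emap => i; rewrite /= /join_ord (unsplitK (inr i)). Qed.

Lemma term_as_context (N : Type) (e : expr Sigma N) :
  exists s (A : 'I_s -> N) (D : expr Sigma 'I_s), e = emap A D.
Proof.
have A0 : 'I_0 -> N by case.
have join s1 s2 (A1 : 'I_s1 -> N) (A2 : 'I_s2 -> N) D1 D2
    (mk : forall V, expr Sigma V -> expr Sigma V -> expr Sigma V) :
    (forall V W (f : V -> W) a b, emap f (mk V a b) = mk W (emap f a) (emap f b)) ->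
    exists s (A : 'I_s -> N) (D : expr Sigma 'I_s), mk N (emap A1 D1) (emap A2 D2) = emap A D.
  move=> emap_mk; exists (s1 + s2), (join_ord A1 A2).
  exists (mk _ (emap (lshift s2) D1) (emap (@rshift s1 s2) D2)).
  by rewrite emap_mk join_ord_lshift join_ord_rshift.
elim: e => [x|w||a [s1 [A1 [D1 ->]]] b [s2 [A2 [D2 ->]]]|j a [s1 [A1 [D1 ->]]] b [s2 [A2 [D2 ->]]]].
- by exists 1, (fun=> x), (ELeaf Sigma ord0).
- by exists 0, A0, (EWord _ w).
- by exists 0, A0, (EOne Sigma _).
- exact: (join _ _ _ _ _ _ (fun V => @ECat Sigma V)).
- exact: (join _ _ _ _ _ _ (fun V => @EIns Sigma V j)).
Qed.

End Renaming.

Unset Implicit Arguments.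

Theorem corollary1 (Sigma : finType) (N : Type) (rkN : N -> nat) (k : nat)
  (alpha : term Sigma N) :
  k_essential rkN k alpha ->
  exists alpha' : term Sigma N, k_correct rkN k alpha' /\ term_equiv rkN alpha alpha'.
Proof.
have [s [A [D ->]]] := term_as_context alpha.
move=> -[/ewf_emap wf_D]; rewrite erk_emap => lt_D /leaves_rank_lt_emap leaves_D.
have [D' [wf_D' sub_D'] equiv_D] := exists_subranks_le_equiv wf_D lt_D leaves_D.
exists (emap A D'); split; first by split; [apply/ewf_emap | apply/subranks_le_emap].
by exists s, A, D, D'.
Qed.
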